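(* Let $n\geq 3$. There exists an $(S_1\times S_{n-1})$-equivariant acyclic matching on the face poset of $\Delta(\overline{\Pi}_n)$ such that the set of critical simplices is $C_n\cup\{\alpha_n\}$.
   Context: $\Pi_n$ is the poset of all set partitions of $[n]=\{1,\dots,n\}$ ordered by refinement (finer is smaller), and $\overline{\Pi}_n$ is obtained by removing the minimum $\{\{1\},\dots,\{n\}\}$ and maximum $\{[n]\}$. $\Delta(\overline{\Pi}_n)$ is its nerve (order complex): its simplices are the nonempty chains $x_0<x_1<\dots<x_k$ of $\overline{\Pi}_n$ (of dimension $k$), and its face poset is the set of these simplices ordered by inclusion. $S_n$ acts on $[n]$, hence on $\overline{\Pi}_n$ and on $\Delta(\overline{\Pi}_n)$; $S_1\times S_{n-1}=\{\sigma\in S_n\mid\sigma(1)=1\}$. Let $A$ be the set of partitions in $\overline{\Pi}_n$ in which every block not containing $1$ is a singleton; $C_n$ is the set of simplices of dimension $n-3$ all of whose vertices lie in $A$; $\alpha_n$ is the vertex (0-simplex) $\{\{1\},\{2,\dots,n\}\}$. A partial matching on a poset is a set of pairs $(a,b)$ with $b$ covering $a$ such that each element lies in at most one pair; it is acyclic if there is no cycle $b_1>a_1<b_2>a_2<\dots<b_t>a_t<b_1$, $t\ge2$, with distinct $b_i$ and $(a_i,b_i)$ in the matching; critical elements are the unmatched ones; a matching is $H$-equivariant if $(a,b)$ in it implies $(ha,hb)$ in it for all $h\in H$. *)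

(* Elements 1..n of [n] are represented by 'I_n (value i <-> i+1). *)
From mathcomp Require Import all_boot fingroup perm.
Set Implicit Arguments. Unset Strict Implicit. Unset Printing Implicit Defensive.

Section PartitionLattice.
Variable n : nat.

Definition elt := 'I_n.
Definition setpart := {set {set elt}}.
Definition simplex := {set setpart}.

Definition is_one (i : elt) : bool := val i == 0.

Definition is_setpart (P : setpart) : bool := partition P [set: elt].

Definition refines (P Q : setpart) : bool :=
  [forall B in P, exists C in Q, B \subset C].

Definition finest : setpart := [set [set i] | i : elt].
Definition coarsest : setpart := [set [set: elt]].

Definition proper_part (P : setpart) : bool :=
  [&& is_setpart P, P != finest & P != coarsest].

Definition is_simplex (c : simplex) : bool :=
  [&& c != set0, [forall P in c, proper_part P] &
      [forall P in c, forall Q in c, refines P Q || refines Q P]].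

Definition dim (c : simplex) : nat := #|c|.-1.

Definition covers (a b : simplex) : bool := (a \proper b) && (#|b| == #|a|.+1).

Definition fixes_one (s : {perm elt}) : bool := [forall i, is_one i ==> is_one (s i)].
Definition act_part (s : {perm elt}) (P : setpart) : setpart := [set (s @: B) | B : {set elt} in P].
Definition act_simplex (s : {perm elt}) (c : simplex) : simplex :=
  [set act_part s P | P in c].

Definition is_matching (M : {set simplex * simplex}) : bool :=
  [forall p in M, [&& is_simplex p.1, is_simplex p.2 & covers p.1 p.2]] &&
  [forall p in M, forall q in M,
     [&& (p.1 == q.1) ==> (p == q), (p.2 == q.2) ==> (p == q),
         p.1 != q.2 & p.2 != q.1]].

(* a cycle b_1 > a_1 < b_2 > a_2 < ... < b_t > a_t < b_1, t >= 2, distinct b_i,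
   (a_i,b_i) in M; given as the sequence of pairs (a_i,b_i) *)
Definition is_cycle (M : {set simplex * simplex}) (s : seq (simplex * simplex)) : Prop :=
  [/\ 2 <= size s, all (fun p => p \in M) s, uniq (map snd s) &
      forall i, i < size s ->
        (nth (set0, set0) s i).1 \proper (nth (set0, set0) s (i.+1 %% size s)).2].

Definition acyclic (M : {set simplex * simplex}) : Prop :=
  forall s, ~ is_cycle M s.

Definition equivariant (M : {set simplex * simplex}) : Prop :=
  forall s : {perm elt}, fixes_one s ->
    forall p, p \in M -> (act_simplex s p.1, act_simplex s p.2) \in M.

Definition critical (M : {set simplex * simplex}) (c : simplex) : bool :=
  [forall p in M, (p.1 != c) && (p.2 != c)].

Definition in_A (P : setpart) : bool :=
  proper_part P && [forall B in P, ~~ [exists i in B, is_one i] ==> (#|B| == 1)].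

Definition in_C (c : simplex) : bool :=
  [&& is_simplex c, dim c == n - 3 & [forall P in c, in_A P]].

Definition alpha : simplex :=
  [set [set [set i | is_one i]; [set i | ~~ is_one i]]].

End PartitionLattice.

From mathcomp Require Import all_boot fingroup perm zify.
Set Implicit Arguments. Unset Strict Implicit. Unset Printing Implicit Defensive.

(* Walk up the blocks of 1 in a chain [c] of proper partitions.  At level [B]
   (initially {1}) let [P] be the finest element of [c] whose block of 1
   strictly contains [B], or the one-block partition if there is none, and let
   [t] be [P] with [B] split off its block of 1; [t] is comparable with every
   element of [c].  If [t] lies in [A] then [P] is itself in [A], with block of
   1 equal to [B] plus one point, and the walk moves up to that block;
   otherwise [c] is matched with [c] plus or minus [t].  Toggling [t] does not
   change the walk, so this is a matching, and it commutes with permutations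
   fixing 1.  A chain is unmatched when the walk passes through n - 2 elements
   of [A] (the chains of [C_n]), or when the partner would be empty, which
   happens only for [alpha_n].  Along a path b > a < b' of the matching the
   triple (size of the final level, number of elements of the chain above it,
   size of the chain) increases lexicographically, so there is no cycle. *)

Lemma imsetD1 (aT rT : finType) (f : aT -> rT) (A : {set aT}) x :
  injective f -> f @: (A :\ x) = f @: A :\ f x.
Proof.
move=> f_inj; apply/setP => y; rewrite !inE.
apply/imsetP/andP => [[z]|[yfx /imsetP[z zA yz]]].
  by rewrite !inE => /andP[zx zA] ->; rewrite (inj_eq f_inj) zx imset_f.
by exists z; rewrite // !inE zA andbT; apply: contra yfx => /eqP zx; rewrite yz zx.
Qed.

Lemma setU1D1 (X : finType) (x : X) (A : {set X}) : (x |: A) :\ x = A :\ x.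
Proof. by apply/setP => y; rewrite !inE; case: eqP. Qed.

Lemma lex_digits_lt k e f b b' d d' : b < k -> d < k ->
  [\/ e < f, e = f /\ b < b' | [/\ e = f, b <= b' & d < d']] ->
  (e * k + b) * k + d < (f * k + b') * k + d'.
Proof. by move=> bk dk [ef|[-> bb]|[-> bb dd]]; nia. Qed.

Lemma cyclically_increasing_nil (X : Type) (x0 : X) (f : X -> nat) (s : seq X) :
  (forall i, i < size s -> f (nth x0 s i) < f (nth x0 s (i.+1 %% size s))) -> size s = 0.
Proof.
move=> incr; apply/eqP; apply: contraT; rewrite -lt0n => s_gt0.
have mono j : j < size s -> f (nth x0 s 0) + j <= f (nth x0 s j).
  elim: j => [|j IH] lt_j; first by rewrite addn0.
  have := incr j (ltnW lt_j); rewrite modn_small // addnS => fj.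
  exact: leq_ltn_trans (IH (ltnW lt_j)) fj.
have last_lt : (size s).-1 < size s by rewrite prednK.
have := leq_ltn_trans (mono _ last_lt) (incr _ last_lt).
by rewrite prednK // modnn -{2}[f _]addn0 ltn_add2l.
Qed.

Section PermImage.
Variables (T : finType) (s : {perm T}).
Implicit Types A B : {set T}.

Lemma mem_imset_perm A y : (y \in s @: A) = ((s^-1)%g y \in A).
Proof. by rewrite -{1}(permKV s y) mem_imset //; apply: perm_inj. Qed.

Lemma subset_imset_perm A B : (s @: A \subset s @: B) = (A \subset B).
Proof.
apply/idP/idP => [sAB|]; last exact: imsetS.
by apply/subsetP => x xA; move: (subsetP sAB (s x)); rewrite !mem_imset_perm permK; apply.
Qed.

Lemma proper_imset_perm A B : (s @: A \proper s @: B) = (A \proper B).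
Proof. by rewrite !properE !subset_imset_perm. Qed.

Lemma imset_permD A B : s @: (A :\: B) = s @: A :\: s @: B.
Proof. by apply/setP => y; rewrite !inE !mem_imset_perm !inE. Qed.

Lemma imset_permT : s @: [set: T] = [set: T].
Proof. by apply/setP => y; rewrite mem_imset_perm !inE. Qed.

End PermImage.

Section SetPartition.
Variable n : nat.
Local Notation T := 'I_n.
Local Notation SP := (setpart n).
Implicit Types (P Q R : SP) (B : {set T}).

Lemma setpart_trivIset P : is_setpart P -> trivIset P.
Proof. by case/and3P. Qed.

Lemma setpart_cover P : is_setpart P -> cover P = setT.
Proof. by case/and3P => /eqP. Qed.

Lemma mem_pblock_setpart P x : is_setpart P -> x \in pblock P x.
Proof. by move=> hP; rewrite mem_pblock setpart_cover. Qed.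

Lemma pblock_setpart P x : is_setpart P -> pblock P x \in P.
Proof. by move=> hP; apply: pblock_mem; rewrite setpart_cover. Qed.

Lemma same_pblock_setpart P x y :
  is_setpart P -> y \in pblock P x -> pblock P y = pblock P x.
Proof. by move/setpart_trivIset; apply: same_pblock. Qed.

Lemma def_pblock_setpart P B x : is_setpart P -> B \in P -> x \in B -> pblock P x = B.
Proof. by move/setpart_trivIset; apply: def_pblock. Qed.

Lemma setpart_pblocks P : is_setpart P -> P = [set pblock P x | x : T].
Proof.
move=> hP; apply/setP => B; apply/idP/imsetP => [BP|[x _ ->]]; last exact: pblock_setpart.
have [B0|[x xB]] := set_0Vmem B; first by case/and3P: hP => _ _; rewrite -B0 BP.
by exists x; rewrite // (def_pblock_setpart hP BP xB).
Qed.

Lemma eq_setpart P Q : is_setpart P -> is_setpart Q ->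
  (forall x, pblock P x = pblock Q x) -> P = Q.
Proof.
by move=> hP hQ ePQ; rewrite (setpart_pblocks hP) (setpart_pblocks hQ); apply: eq_imset.
Qed.

Lemma setpart_of_blocks (f : T -> {set T}) : (forall x, x \in f x) ->
  (forall x y, y \in f x -> f y = f x) ->
  is_setpart [set f x | x : T] /\ forall x, pblock [set f x | x : T] x = f x.
Proof.
move=> f_refl f_blk.
have triv : trivIset [set f x | x : T].
  apply/trivIsetP => _ _ /imsetP[x _ ->] /imsetP[y _ ->] fxy.
  apply/pred0P => z /=; apply: contraNF fxy => /andP[zx zy].
  by rewrite -(f_blk _ _ zx) -(f_blk _ _ zy).
have hP : is_setpart [set f x | x : T].
  apply/and3P; split => //.
    apply/eqP/setP => x; rewrite inE; apply/bigcupP.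
    by exists (f x); rewrite ?imset_f.
  by apply/imsetP => -[x _ fx0]; move: (f_refl x); rewrite -fx0 inE.
by split=> // x; apply: def_pblock_setpart; rewrite ?imset_f.
Qed.

Lemma refinesP P Q : is_setpart P -> is_setpart Q ->
  reflect (forall x, pblock P x \subset pblock Q x) (refines P Q).
Proof.
move=> hP hQ; apply: (iffP forall_inP) => [PQ x|PQ B BP].
  have /existsP[C /andP[CQ sBC]] := PQ _ (pblock_setpart x hP).
  by rewrite (def_pblock_setpart hQ CQ (subsetP sBC _ (mem_pblock_setpart x hP))).
rewrite (setpart_pblocks hP) in BP; case/imsetP: BP => x _ ->.
by apply/existsP; exists (pblock Q x); rewrite pblock_setpart //= PQ.
Qed.

Lemma refines_refl P : is_setpart P -> refines P P.
Proof. by move=> hP; apply/refinesP. Qed.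

Lemma refines_trans P Q R : is_setpart P -> is_setpart Q -> is_setpart R ->
  refines P Q -> refines Q R -> refines P R.
Proof.
move=> hP hQ hR /(refinesP hP hQ) PQ /(refinesP hQ hR) QR.
by apply/refinesP => // x; apply: subset_trans (PQ x) (QR x).
Qed.

Lemma refines_anti P Q : is_setpart P -> is_setpart Q ->
  refines P Q -> refines Q P -> P = Q.
Proof.
move=> hP hQ /(refinesP hP hQ) PQ /(refinesP hQ hP) QP.
by apply: eq_setpart => // x; apply/eqP; rewrite eqEsubset PQ QP.
Qed.

(* The map sending a block of [P] to the block of [Q] containing it is onto
   and, as [P != Q], not injective. *)
Lemma refines_card_lt P Q : is_setpart P -> is_setpart Q ->
  refines P Q -> P != Q -> #|Q| < #|P|.
Proof.
move=> hP hQ /(refinesP hP hQ) PQ neqPQ.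
pose up (B : {set T}) := \bigcup_(x in B) pblock Q x.
have up_pblock x : up (pblock P x) = pblock Q x.
  apply/eqP; rewrite eqEsubset; apply/andP; split.
    by apply/bigcupsP => y yP; rewrite (same_pblock_setpart hQ (subsetP (PQ x) _ yP)).
  by apply: (bigcup_max x) => //; apply: mem_pblock_setpart.
have QE : Q = up @: P.
  rewrite {1}(setpart_pblocks hQ) [in RHS](setpart_pblocks hP) -imset_comp.
  by apply: eq_imset => x /=; rewrite up_pblock.
rewrite ltn_neqAle {2}QE leq_imset_card andbT; apply: contra neqPQ => /eqP cardPQ.
have up_inj : {in P &, injective up} by apply/imset_injP; rewrite -QE cardPQ.
apply/eqP/eq_setpart => // x; apply/eqP; rewrite eqEsubset PQ /=.
apply/subsetP => y yQ; suff <- : pblock P y = pblock P x by apply: mem_pblock_setpart.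
by apply: up_inj; rewrite ?pblock_setpart // !up_pblock; apply: same_pblock_setpart.
Qed.

Lemma finest_blocks :
  is_setpart (finest n) /\ forall x, pblock (finest n) x = [set x].
Proof. by apply: (setpart_of_blocks (f := set1)) => [x|x y]; rewrite ?inE // => /eqP->. Qed.

Lemma card_finest : #|finest n| = n.
Proof. by rewrite card_imset ?card_ord //; apply: set1_inj. Qed.

Lemma proper_part_setpart P : proper_part P -> is_setpart P.
Proof. by case/and3P. Qed.

End SetPartition.

Section Pointed.
Variable n : nat.
Local Notation T := 'I_n.
Local Notation SP := (setpart n).
Implicit Types (P Q R t : SP) (B : {set T}) (a c : simplex n).
(* The element 1 of [n]; ['I_n] has no canonical element of value 0 for a
   variable [n]. *)
Variable o : T.
Hypothesis o_one : is_one o.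

Lemma is_oneE i : is_one i = (i == o).
Proof.
move: o_one; rewrite /is_one => /eqP o0.
by apply/eqP/eqP => [i0|->//]; apply: val_inj; rewrite /= i0 o0.
Qed.

Lemma ord_neq_one i : val i != 0 -> i != o.
Proof. by rewrite -is_oneE. Qed.

Definition block1 P := pblock P o.

Lemma coarsest_blocks :
  is_setpart (coarsest n) /\ forall x, pblock (coarsest n) x = setT.
Proof.
have [hP eP] := setpart_of_blocks (fun x => in_setT x) (fun x y _ => erefl [set: T]).
suff <- : [set [set: T] | _ : T] = coarsest n by [].
by apply/setP => B; rewrite !inE; apply/imsetP/eqP => [[x _ ->]|->]; last exists o.
Qed.

Lemma block1_coarsest : block1 (coarsest n) = setT.
Proof. by rewrite /block1; case: coarsest_blocks => _ ->. Qed.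

Lemma finest_refines P : is_setpart P -> refines (finest n) P.
Proof.
case: (@finest_blocks n) => hf ef hP.
by apply/refinesP => // x; rewrite ef sub1set mem_pblock_setpart.
Qed.

Lemma refines_coarsest P : is_setpart P -> refines P (coarsest n).
Proof.
case: coarsest_blocks => hc ec hP.
by apply/refinesP => // x; rewrite ec subsetT.
Qed.

Lemma proper_part_card P : proper_part P -> 1 < #|P| < n.
Proof.
case/and3P => hP nf nc; case: (@finest_blocks n) => hf _; case: coarsest_blocks => hc _.
have := refines_card_lt hP hc (refines_coarsest hP) nc; rewrite cards1 => ->.
by rewrite -[X in _ < X](card_finest n) refines_card_lt ?finest_refines // eq_sym.
Qed.

Lemma mem_block1 P : is_setpart P -> o \in block1 P.
Proof. exact: mem_pblock_setpart. Qed.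

Lemma block1_sub P Q : is_setpart P -> is_setpart Q -> refines P Q ->
  block1 P \subset block1 Q.
Proof. by move=> hP hQ /(refinesP hP hQ); apply. Qed.

Lemma pblock_block1 P x : is_setpart P -> x \in block1 P -> pblock P x = block1 P.
Proof. exact: same_pblock_setpart. Qed.

Lemma notin_block1 P x : is_setpart P -> x \notin block1 P -> o \notin pblock P x.
Proof.
move=> hP; apply: contra => /(same_pblock_setpart hP) eo.
by rewrite /block1 eo mem_pblock_setpart.
Qed.

Definition single_block B : SP := [set if x \in B then B else [set x] | x : T].

Lemma single_block_blocks B : is_setpart (single_block B) /\
  forall x, pblock (single_block B) x = if x \in B then B else [set x].
Proof.
apply: setpart_of_blocks => [x|x y]; first by case: ifP; rewrite ?set11.
by case: ifP => xB; [move->|rewrite inE => /eqP->; rewrite xB].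
Qed.

Lemma setpart_single_block B : is_setpart (single_block B).
Proof. by case: (single_block_blocks B). Qed.

Lemma pblock_single_block B x :
  pblock (single_block B) x = if x \in B then B else [set x].
Proof. by case: (single_block_blocks B). Qed.

Lemma block1_single_block B : o \in B -> block1 (single_block B) = B.
Proof. by move=> oB; rewrite /block1 pblock_single_block oB. Qed.

Lemma refines_single_block B Q : o \in B -> is_setpart Q ->
  refines (single_block B) Q = (B \subset block1 Q).
Proof.
move=> oB hQ; have hB := setpart_single_block B.
apply/idP/idP => [BQ|sBQ]; first by rewrite -{1}(block1_single_block oB) block1_sub.
apply/refinesP => // x; rewrite pblock_single_block; case: ifP => xB.
  by rewrite pblock_block1 // (subsetP sBQ).
by rewrite sub1set mem_pblock_setpart.
Qed.

Lemma refines_single_block_eq Q B : is_setpart Q ->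
  refines Q (single_block B) -> block1 Q = B -> Q = single_block B.
Proof.
move=> hQ /(refinesP hQ (setpart_single_block B)) QB eB.
apply: eq_setpart => //; first exact: setpart_single_block.
move=> x; move: (QB x); rewrite pblock_single_block; case: ifP => xB.
  by rewrite pblock_block1 // eB.
by move=> sQ; apply/eqP; rewrite eqEsubset sQ sub1set mem_pblock_setpart.
Qed.

Lemma finest_single_block : finest n = single_block [set o].
Proof.
case: (@finest_blocks n) => hf ef; apply: eq_setpart => //; first exact: setpart_single_block.
by move=> x; rewrite ef pblock_single_block inE; case: eqP => // ->.
Qed.

Lemma in_AE Q : in_A Q = proper_part Q && (Q == single_block (block1 Q)).
Proof.
rewrite /in_A; case pQ: (proper_part Q) => //=; have hQ := proper_part_setpart pQ.
apply/forall_inP/eqP => [singl|eQ B]; last first.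
  rewrite {1}eQ => /imsetP[x _ ->]; case: ifP => xB; rewrite ?cards1 ?eqxx ?implybT //.
  by apply/implyP => /existsPn/(_ o); rewrite mem_block1 // is_oneE eqxx.
apply: eq_setpart => //; first exact: setpart_single_block.
move=> x; rewrite pblock_single_block; case: ifPn => xB; first by rewrite pblock_block1.
have no1 : ~~ [exists i in pblock Q x, is_one i].
  apply/existsP => -[i /andP[ix]]; rewrite is_oneE => /eqP io.
  by case/negP: (notin_block1 hQ xB); rewrite -io.
have /cards1P[y ey] := implyP (singl _ (pblock_setpart x hQ)) no1.
by move: (mem_pblock_setpart x hQ); rewrite ey inE => /eqP <-.
Qed.

Definition split_off_block B P x :=
  if x \in B then B else if x \in block1 P then block1 P :\: B else pblock P x.
Definition split_off B P : SP := [set split_off_block B P x | x : T].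

Lemma split_off_blocks B P : is_setpart P -> B \subset block1 P ->
  is_setpart (split_off B P) /\ forall x, pblock (split_off B P) x = split_off_block B P x.
Proof.
move=> hP sB; apply: setpart_of_blocks => [x|x y]; rewrite /split_off_block.
  by case: ifP => // xB; case: ifP => xP; rewrite ?inE ?xB ?xP ?mem_pblock_setpart.
case: ifP => xB; first by move->.
case: ifP => xP; first by rewrite inE => /andP[/negbTE-> ->].
move=> yx; have yP : y \notin block1 P.
  apply: contraFN xP => yP.
  by rewrite -(pblock_block1 hP yP) (same_pblock_setpart hP yx) mem_pblock_setpart.
by rewrite (negbTE (contra (subsetP sB y) yP)) (negbTE yP) (same_pblock_setpart hP yx).
Qed.

Section SplitOff.
Variables (B : {set T}) (P : SP).
Hypotheses (hP : is_setpart P) (sBP : B \subset block1 P).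

Lemma setpart_split_off : is_setpart (split_off B P).
Proof. by case: (split_off_blocks hP sBP). Qed.

Lemma pblock_split_off x : pblock (split_off B P) x = split_off_block B P x.
Proof. by case: (split_off_blocks hP sBP). Qed.

Lemma block1_split_off : o \in B -> block1 (split_off B P) = B.
Proof. by move=> oB; rewrite /block1 pblock_split_off /split_off_block oB. Qed.

Lemma split_off_refines : refines (split_off B P) P.
Proof.
apply/refinesP => //; first exact: setpart_split_off.
move=> x; rewrite pblock_split_off /split_off_block; case: ifP => xB.
  by rewrite pblock_block1 // (subsetP sBP).
by case: ifP => xP //; rewrite pblock_block1 // subsetDl.
Qed.

Lemma single_block_refines_split_off : o \in B -> refines (single_block B) (split_off B P).
Proof. by move=> oB; rewrite refines_single_block ?block1_split_off ?setpart_split_off. Qed.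

Lemma refines_split_off Q : is_setpart Q -> block1 Q = B -> refines Q P ->
  refines Q (split_off B P).
Proof.
move=> hQ eQ /(refinesP hQ hP) QP; apply/refinesP => //; first exact: setpart_split_off.
move=> x; rewrite pblock_split_off /split_off_block; case: ifP => xB.
  by rewrite pblock_block1 // eQ.
case: ifP => xP; last exact: QP.
apply/subsetP => y yx; rewrite inE.
have := subsetP (QP x) _ yx; rewrite pblock_block1 // => ->; rewrite andbT.
apply: contraFN xB => yB; rewrite -eQ -(pblock_block1 (x := y)) ?eQ //.
by rewrite (same_pblock_setpart hQ yx) mem_pblock_setpart.
Qed.

Lemma split_off_eq_single_block : B \proper block1 P -> o \in B ->
  split_off B P = single_block B ->
  P = single_block (block1 P) /\ #|block1 P| = #|B|.+1.
Proof.
move=> prB oB eBP; split.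
  apply: eq_setpart => //; first exact: setpart_single_block.
  move=> x; rewrite pblock_single_block; case: ifPn => xP; first by rewrite pblock_block1.
  have := pblock_split_off x; rewrite eBP pblock_single_block /split_off_block (negbTE xP).
  by rewrite (negbTE (contra (subsetP sBP x) xP)).
case/properP: prB => _ [y yP yB].
have := pblock_split_off y; rewrite eBP pblock_single_block /split_off_block (negbTE yB) yP => eD.
by rewrite -(cardsID B (block1 P)) -eD cards1 addn1 (setIidPr sBP).
Qed.

Lemma proper_part_split_off : o \in B -> B != setT ->
  split_off B P != single_block B -> proper_part (split_off B P).
Proof.
move=> oB BT neq; have hS := setpart_split_off.
apply/and3P; split => //.
  apply: contra neq => /eqP eS; have eB := block1_split_off oB.
  rewrite eS finest_single_block block1_single_block ?set11 // in eB.
  by rewrite eS finest_single_block eB.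
by apply: contra BT => /eqP eS; rewrite -(block1_split_off oB) eS block1_coarsest.
Qed.

End SplitOff.

(** * Chains *)

(* Unlike [is_simplex], allows the empty chain, so that removing a vertex stays a chain. *)
Definition is_chain c :=
  [forall P in c, proper_part P] && [forall P in c, forall Q in c, refines P Q || refines Q P].

Lemma simplex_chain c : is_simplex c -> is_chain c.
Proof. by case/and3P => _ pc cc; apply/andP. Qed.

Lemma chain_simplex c : c != set0 -> is_chain c -> is_simplex c.
Proof. by move=> c0 /andP[pc cc]; apply/and3P. Qed.

Lemma chain_proper_part c P : is_chain c -> P \in c -> proper_part P.
Proof. by case/andP => /forall_inP pc _; apply: pc. Qed.

Lemma chain_setpart c P : is_chain c -> P \in c -> is_setpart P.
Proof. by move=> hc Pc; apply/proper_part_setpart/(chain_proper_part hc Pc). Qed.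

Lemma chain_comparable c P Q : is_chain c -> P \in c -> Q \in c ->
  refines P Q || refines Q P.
Proof. by case/andP => _ /forall_inP cc Pc; move/forall_inP: (cc P Pc); apply. Qed.

Lemma chain_sub c c' : is_chain c -> c' \subset c -> is_chain c'.
Proof.
move=> hc /subsetP sc; apply/andP; split; apply/forall_inP => P /sc Pc.
  exact: chain_proper_part hc Pc.
by apply/forall_inP => Q /sc Qc; apply: chain_comparable hc Pc Qc.
Qed.

Lemma chain_setU1 c t : is_chain c -> proper_part t ->
  (forall Q, Q \in c -> refines Q t || refines t Q) -> is_chain (t |: c).
Proof.
move=> hc pt ct; have ht := proper_part_setpart pt.
apply/andP; split; apply/forall_inP => P.
  by case/setU1P => [->|]; last apply: chain_proper_part.
case/setU1P => [->|Pc]; apply/forall_inP => Q /setU1P[->|Qc].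
- by rewrite refines_refl.
- by rewrite orbC ct.
- by rewrite ct.
- exact: chain_comparable hc Pc Qc.
Qed.

(* Distinct elements of a chain have distinct numbers of blocks, all in [2, n - 1]. *)
Lemma card_chain_le c : is_chain c -> #|c| <= n - 2.
Proof.
move=> hc; rewrite cardE -(size_map (fun P : SP => #|P|)) -(size_iota 2 (n - 2)).
apply: uniq_leq_size => [|k /mapP[P]]; last first.
  rewrite mem_enum mem_iota => Pc ->.
  by case/andP: (proper_part_card (chain_proper_part hc Pc)) => lt1 ltn; lia.
rewrite map_inj_in_uniq ?enum_uniq // => P Q; rewrite !mem_enum => Pc Qc eqPQ.
have hP := chain_setpart hc Pc; have hQ := chain_setpart hc Qc.
apply/eqP; apply: contraTT isT => neqPQ.
case/orP: (chain_comparable hc Pc Qc) => PQ.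
  by have := refines_card_lt hP hQ PQ neqPQ; rewrite eqPQ ltnn.
by have := refines_card_lt hQ hP PQ; rewrite eq_sym eqPQ ltnn => /(_ neqPQ).
Qed.

Definition above B c := [set Q in c | B \proper block1 Q].

Definition least_above B c : SP :=
  odflt (coarsest n) [pick Q in above B c | [forall R in above B c, refines Q R]].

Lemma above_sub B c : above B c \subset c.
Proof. by apply/subsetP => Q; rewrite inE => /andP[]. Qed.

Lemma above_subS B c c' : c \subset c' -> above B c \subset above B c'.
Proof. by move=> /subsetP scc'; apply/subsetP => Q; rewrite !inE => /andP[/scc' -> ->]. Qed.

Variant least_above_spec B c : SP -> Prop :=
| LeastAboveNone of above B c = set0 : least_above_spec B c (coarsest n)
| LeastAboveSome P of P \in above B c & (forall R, R \in above B c -> refines P R) :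
    least_above_spec B c P.

Lemma least_aboveP B c : is_chain c -> least_above_spec B c (least_above B c).
Proof.
move=> hc; rewrite /least_above; case: pickP => [Q /andP[QU /forall_inP Qmin]|none].
  exact: LeastAboveSome.
suff ab0 : above B c = set0 by apply: LeastAboveNone.
apply/eqP/set0Pn => -[R0 R0U]; have sU := subsetP (above_sub B c).
have [Q QU Qmax] := arg_maxnP (fun Q : SP => #|Q|) R0U.
have {}QU : Q \in above B c := QU.
suff Qmin : [forall R in above B c, refines Q R] by move: (none Q); rewrite /= QU Qmin.
apply/forall_inP => R RU.
case/orP: (chain_comparable hc (sU _ QU) (sU _ RU)) => // RQ.
have [->|neRQ] := eqVneq R Q; first exact/refines_refl/(chain_setpart hc (sU _ QU)).
have := refines_card_lt (chain_setpart hc (sU _ RU)) (chain_setpart hc (sU _ QU)) RQ neRQ.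
have RQcard : #|R| <= #|Q| := Qmax R RU.
by rewrite ltnNge RQcard.
Qed.

Lemma least_above_set0 B c : above B c = set0 -> least_above B c = coarsest n.
Proof. by move=> ab0; rewrite /least_above ab0; case: pickP => // P; rewrite inE. Qed.

Lemma least_above_min B c R : is_chain c -> R \in above B c -> refines (least_above B c) R.
Proof. by move=> hc RU; case: (least_aboveP B hc) RU => [->|P _ Pmin /Pmin //]; rewrite inE. Qed.

Lemma least_above_eq B c P : is_chain c -> P \in above B c ->
  (forall R, R \in above B c -> refines P R) -> least_above B c = P.
Proof.
move=> hc PU Pmin; have sU := subsetP (above_sub B c).
case: (least_aboveP B hc) => [ab0|Q QU Qmin]; first by move: PU; rewrite ab0 inE.
by apply: refines_anti; auto; apply: chain_setpart hc _; apply: sU.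
Qed.

Lemma setpart_least_above B c : is_chain c -> is_setpart (least_above B c).
Proof.
move=> hc; case: (least_aboveP B hc) => // [_|P PU _]; first by case: coarsest_blocks.
by apply: chain_setpart hc _; apply: (subsetP (above_sub B c)).
Qed.

Lemma proper_block1_least_above B c : is_chain c -> B != setT ->
  B \proper block1 (least_above B c).
Proof.
move=> hc BT; case: (least_aboveP B hc) => // [_|P]; last by rewrite inE => /andP[].
by rewrite block1_coarsest properEneq BT subsetT.
Qed.

Definition reached B c :=
  o \in B /\ [\/ B = [set o], B = setT | single_block B \in c].

Lemma reached1 c : reached [set o] c.
Proof. by split; [rewrite set11 | constructor]. Qed.

Lemma reached_sub B c c' : reached B c -> c \subset c' -> reached B c'.
Proof. by move=> [oB [eB|eB|Bc]] /subsetP scc'; split => //; constructor; auto. Qed.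

Lemma refines_single_block_reached B c Q : is_chain c -> reached B c -> Q \in c ->
  ~~ (B \subset block1 Q) -> refines Q (single_block B).
Proof.
move=> hc [oB [eB|eB|Bc]] Qc nsBQ; have hQ := chain_setpart hc Qc.
- by move: nsBQ; rewrite eB sub1set mem_block1.
- suff -> : single_block B = coarsest n by apply: refines_coarsest.
  case: coarsest_blocks => hC eC; apply: eq_setpart; rewrite ?setpart_single_block //.
  by move=> x; rewrite pblock_single_block eB inE eC.
- case/orP: (chain_comparable hc Bc Qc) => // BQ.
  by move: nsBQ; rewrite -refines_single_block ?BQ.
Qed.

(* The partition toggled at level [B]. *)
Definition candidate B c := split_off B (least_above B c).

Lemma candidate_spec B c : is_chain c -> reached B c -> B != setT ->
  candidate B c != single_block B ->
  [/\ proper_part (candidate B c),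
      forall Q, Q \in c -> refines Q (candidate B c) || refines (candidate B c) Q,
      block1 (candidate B c) = B & ~~ in_A (candidate B c)].
Proof.
move=> hc rB BT neqt; have oB := rB.1.
have hP := setpart_least_above B hc; have prB := proper_block1_least_above hc BT.
have sB := proper_sub prB; have ht := setpart_split_off hP sB.
have bt : block1 (candidate B c) = B by apply: block1_split_off.
split=> //; first exact: proper_part_split_off.
  move=> Q Qc; have hQ := chain_setpart hc Qc.
  have [sBQ|nsBQ] := boolP (B \subset block1 Q); last first.
    apply/orP; left; apply: (refines_trans hQ (setpart_single_block B) ht).
      exact: refines_single_block_reached hc rB Qc nsBQ.
    exact: single_block_refines_split_off.
  have [eB|neB] := eqVneq (block1 Q) B.
    apply/orP; left; apply: refines_split_off => //.
    case: (least_aboveP B hc) => [_|P PU _]; first exact: refines_coarsest.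
    have /andP[Pc prBP] : (P \in c) && (B \proper block1 P) by rewrite inE in PU.
    case/orP: (chain_comparable hc Qc Pc) => // PQ.
    have := block1_sub (chain_setpart hc Pc) hQ PQ; rewrite eB => sPB.
    by move: prBP; rewrite properE sPB andbF.
  have QU : Q \in above B c by rewrite inE Qc properEneq eq_sym neB sBQ.
  apply/orP; right; apply: (refines_trans ht hP hQ (split_off_refines hP sB)).
  exact: least_above_min.
by rewrite in_AE negb_and bt neqt orbT.
Qed.

(** * The search *)

(* Climb the levels [B] while the candidate is [single_block B], i.e. lies in
   [A]; [k] is fuel. *)
Fixpoint search k B c : option ({set T} * SP) :=
  if k is k'.+1 then
    if B == setT then None else
    if candidate B c != single_block B then Some (B, candidate B c)
    else search k' (block1 (least_above B c)) c
  else None.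

Lemma search_step B c : is_chain c -> reached B c -> B != setT ->
  candidate B c = single_block B ->
  let P := least_above B c in
  [/\ reached (block1 P) c, #|block1 P| = #|B|.+1, B \proper block1 P &
      P = coarsest n \/ (P \in above B c /\ P = single_block (block1 P))].
Proof.
move=> hc rB BT; have oB := rB.1; rewrite /candidate.
case: (least_aboveP B hc) (setpart_least_above B hc) (proper_block1_least_above hc BT)
  => [_|P PU _] hP prB eqt /=;
  have [eP cardP] := split_off_eq_single_block hP (proper_sub prB) prB oB eqt.
  by split=> //; [split; rewrite block1_coarsest ?inE //; apply: Or32 | left].
split=> //; last by right.
split; first exact: (subsetP (proper_sub prB)).
by apply: Or33; rewrite -eP; apply: (subsetP (above_sub B c)).
Qed.

Lemma search_some k B c Bf t : is_chain c -> reached B c ->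
  search k B c = Some (Bf, t) ->
  [/\ reached Bf c, B \subset Bf, Bf != setT, t = candidate Bf c & t != single_block Bf].
Proof.
elim: k B => [//|k IH] B hc rB /=.
case: eqP => // /eqP BT; case: ifP => [neqt [<- <-] | /negbFE /eqP eqt found]; first by split.
have [rP _ prB _] := search_step hc rB BT eqt.
have [? sPBf ? ? ?] := IH _ hc rP found; split => //.
exact: subset_trans (proper_sub prB) sPBf.
Qed.

(* When the search fails, every level it climbed through contributes an
   element of [A] to [c]. *)
Lemma search_none k B c : is_chain c -> reached B c -> n < #|B| + k ->
  search k B c = None ->
  n.-1 - #|B| <= #|[set Q in above B c | in_A Q]|.
Proof.
elim: k B => [|k IH] B hc rB.
  by rewrite addn0 => ltnB; move: (max_card B); rewrite card_ord leqNgt ltnB.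
move=> fuel /=; case: eqP => [-> _|/eqP BT].
  by rewrite cardsT card_ord (_ : n.-1 - n = 0) //; apply/eqP/leq_pred.
case: ifP => // /negbFE /eqP eqt fail.
have [rP cardP prB [Pco|[PU PA]]] := search_step hc rB BT eqt.
  move: cardP; rewrite Pco block1_coarsest cardsT card_ord => nB.
  by rewrite [in n.-1]nB succnK subnn.
set P := least_above B c in cardP prB PU PA rP fail.
have := IH _ hc rP; rewrite cardP addSnnS => /(_ fuel fail).
set S' := [set Q in _ | _]; set S := [set Q in _ | _].
have sPS : P |: S' \subset S.
  apply/subsetP => Q /setU1P[->|]; rewrite !inE.
    rewrite in_AE -PA eqxx andbT; move: PU; rewrite !inE => /andP[Pc ->].
    by rewrite Pc (chain_proper_part hc Pc).
  case/andP => /andP[Qc pr] QA; rewrite Qc QA andbT /=.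
  exact: proper_trans prB pr.
have PS' : P \notin S' by rewrite !inE properE subxx !andbF.
have := subset_leq_card sPS; rewrite cardsU1 PS' add1n.
by move: #|S'| #|S| #|B| => a b d; lia.
Qed.

Lemma above_eq B c c' t : block1 t = B -> c' :\ t = c :\ t -> above B c' = above B c.
Proof.
move=> bt ecc'; apply/setP => Q; rewrite !inE.
have [->|Qt] := eqVneq Q t; first by rewrite bt properE subxx !andbF.
by move/setP: ecc' => /(_ Q); rewrite !inE Qt /= => ->.
Qed.

Lemma search_toggle k B c c' Bf t : is_chain c -> is_chain c' ->
  reached B c -> reached B c' -> search k B c = Some (Bf, t) ->
  c' :\ t = c :\ t -> search k B c' = Some (Bf, t).
Proof.
move=> hc hc' rB rB' found ecc'.
have [rBf sBf BfT tdef neqt] := search_some hc rB found.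
have neqc : candidate Bf c != single_block Bf by rewrite -tdef.
have [pt _ bt nAt] := candidate_spec hc rBf BfT neqc; rewrite -tdef in pt bt nAt.
have mem_c Q : Q != t -> (Q \in c') = (Q \in c).
  by move=> Qt; move/setP: ecc' => /(_ Q); rewrite !inE Qt.
elim: k B rB rB' found sBf => [//|k IH] B rB rB' /= found sBf.
move: found; case: eqP => // /eqP BT.
case: ifP => [neq [eB et] | /negbFE /eqP eqt found].
  have eLA : least_above B c' = least_above B c by rewrite /least_above eB (above_eq bt ecc').
  by rewrite /candidate eLA -/(candidate B c) neq et eB.
have [rP _ prB [Pco|[PU PA]]] := search_step hc rB BT eqt.
  have [_ sPBf _ _ _] := search_some hc rP found.
  by move: BfT; rewrite eqEsubset subsetT -{1}block1_coarsest -Pco sPBf.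
have [_ sPBf _ _ _] := search_some hc rP found.
set P := least_above B c in rP prB PU PA eqt found sPBf.
have /andP[Pc prBP] : (P \in c) && (B \proper block1 P) by rewrite inE in PU.
have Pt : P != t.
  by apply: contraNneq nAt => <-; rewrite in_AE -PA eqxx (chain_proper_part hc Pc).
have eLA : least_above B c' = P.
  apply: least_above_eq => //; first by rewrite inE mem_c // Pc.
  move=> R; rewrite inE => /andP[Rc' prBR]; have [->|Rt] := eqVneq R t.
    rewrite PA refines_single_block ?bt ?mem_block1 ?(chain_setpart hc Pc) //.
    exact: proper_part_setpart.
  by apply: least_above_min; rewrite // inE -mem_c ?Rc' ?prBR.
have eqt' : candidate B c' = single_block B by rewrite /candidate eLA.
rewrite eLA eqt' eqxx /=.
have [rP' _ _ _] := search_step hc' rB' BT eqt'; rewrite eLA in rP'.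
exact: IH.
Qed.

Lemma least_above_subset_neq B a a' : is_chain a' -> a \subset a' ->
  least_above B a' != least_above B a -> least_above B a' \in above B a' :\: above B a.
Proof.
move=> ha' saa' neq; have ha := chain_sub ha' saa'; have sU := subsetP (above_subS B saa').
case: (least_aboveP B ha') neq => [ab0|P' P'U P'min].
  case: (least_aboveP B ha) => [_|P PU _]; first by rewrite eqxx.
  by move: (sU _ PU); rewrite ab0 inE.
rewrite inE P'U andbT; apply: contra => P'Ua.
by rewrite (least_above_eq ha P'Ua) // => R /sU /P'min.
Qed.

(* Where the search on [a] moves up a level, so does the search on any larger
   chain: the element of [A] it steps through is still the least one above [B]. *)
Lemma least_above_subset_eq B a a' : is_chain a' -> a \subset a' -> reached B a ->
  B != setT -> candidate B a = single_block B -> least_above B a' = least_above B a.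
Proof.
move=> ha' saa' rB BT eqt; have ha := chain_sub ha' saa'.
have hP := setpart_least_above B ha; have hP' := setpart_least_above B ha'.
have prB := proper_block1_least_above ha BT; have prB' := proper_block1_least_above ha' BT.
have [eP cardP] := split_off_eq_single_block hP (proper_sub prB) prB rB.1 eqt.
have P'P : refines (least_above B a') (least_above B a).
  case: (least_aboveP B ha) => [_|P PU _]; first exact: refines_coarsest.
  by apply: least_above_min; rewrite // (subsetP (above_subS B saa')).
have eb : block1 (least_above B a') = block1 (least_above B a).
  by apply/eqP; rewrite eqEcard block1_sub //= cardP; apply: proper_card.
by rewrite eP; apply: refines_single_block_eq; rewrite // -eP.
Qed.

Lemma search_subset k B a a' Bf t Bf' t' : is_chain a' -> a \subset a' -> reached B a ->
  search k B a = Some (Bf, t) -> search k B a' = Some (Bf', t') ->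
  Bf \proper Bf' \/ (Bf' = Bf /\ (t' = t \/ #|above Bf a| < #|above Bf a'|)).
Proof.
move=> ha' saa'; have ha := chain_sub ha' saa'.
elim: k B => [//|k IH] B rB /=; case: eqP => // /eqP BT.
case: ifP => [neqt [<- <-] | /negbFE /eqP eqt found]; last first.
  have eLA := least_above_subset_eq ha' saa' rB BT eqt.
  rewrite /candidate eLA -/(candidate B a) eqt eqxx /= => found'.
  have [rP _ _ _] := search_step ha rB BT eqt.
  exact: IH rP found found'.
have [eLA|neLA] := eqVneq (least_above B a') (least_above B a).
  by rewrite /candidate eLA -/(candidate B a) neqt => -[<- <-]; right; split; last left.
have := least_above_subset_neq ha' saa' neLA; rewrite inE => /andP[P'a P'a'].
case: ifP => [_ [<- _] | /negbFE /eqP eqt' found'].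
  right; split => //; right; apply: proper_card; rewrite properE above_subS //=.
  by apply/subsetPn; exists (least_above B a').
have [rP' _ prB' _] := search_step ha' (reached_sub rB saa') BT eqt'.
have [_ sP'Bf' _ _ _] := search_some ha' rP' found'.
by left; apply: proper_sub_trans sP'Bf'.
Qed.

(** * The matching *)

Definition toggle c := search n [set o] c.

Lemma toggle_spec c Bf t : is_chain c -> toggle c = Some (Bf, t) ->
  [/\ proper_part t, forall Q, Q \in c -> refines Q t || refines t Q,
      block1 t = Bf & ~~ in_A t].
Proof.
move=> hc found; have [rBf _ BfT tdef neqt] := search_some hc (reached1 c) found.
rewrite tdef; rewrite tdef in neqt.
by case: (candidate_spec hc rBf BfT neqt).
Qed.

Lemma toggle_eq c c' Bf t : is_chain c -> is_chain c' -> toggle c = Some (Bf, t) ->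
  c' :\ t = c :\ t -> toggle c' = Some (Bf, t).
Proof. by move=> hc hc'; apply: (search_toggle hc hc' (reached1 c) (reached1 c')). Qed.

Lemma chain_setU1_toggle c Bf t : is_chain c -> toggle c = Some (Bf, t) -> is_chain (t |: c).
Proof. by move=> hc found; have [pt ct _ _] := toggle_spec hc found; apply: chain_setU1. Qed.

Definition toggle_matching : {set simplex n * simplex n} :=
  [set p | [&& is_simplex p.2, p.1 != set0 &
     if toggle p.2 is Some (_, t) then (t \in p.2) && (p.1 == p.2 :\ t) else false]].

Lemma toggle_matchingP p : p \in toggle_matching -> exists Bf t,
  [/\ is_simplex p.2, p.1 != set0, t \in p.2, p.1 = p.2 :\ t &
      toggle p.1 = Some (Bf, t) /\ toggle p.2 = Some (Bf, t)].
Proof.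
rewrite inE => /and3P[s2 ne1]; case found: (toggle p.2) => [[Bf t]|//] /andP[tin /eqP e1].
have hc1 : is_chain p.1 by rewrite e1; apply: chain_sub (simplex_chain s2) (subD1set _ _).
exists Bf, t; split=> //; split=> //.
by apply: toggle_eq (simplex_chain s2) hc1 found _; rewrite e1 setDDl setUid.
Qed.

Lemma toggle_matching_setD1 c Bf t : is_simplex c -> toggle c = Some (Bf, t) ->
  t \in c -> c :\ t != set0 -> (c :\ t, c) \in toggle_matching.
Proof. by move=> sc found tc ne; rewrite inE /= sc ne found tc eqxx. Qed.

Lemma toggle_matching_setU1 c Bf t : is_simplex c -> toggle c = Some (Bf, t) ->
  t \notin c -> (c, t |: c) \in toggle_matching.
Proof.
move=> sc found tc; have hc := simplex_chain sc.
have hc' := chain_setU1_toggle hc found.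
have sc' : is_simplex (t |: c).
  by apply: chain_simplex hc'; apply/set0Pn; exists t; rewrite setU11.
have found' := toggle_eq hc hc' found (setU1D1 t c).
by rewrite inE /= sc' found' setU11 setU1K // eqxx /= andbT; case/and3P: sc.
Qed.

Lemma is_matching_toggle : is_matching toggle_matching.
Proof.
have pairE (r : simplex n * simplex n) : r = (r.1, r.2) by case: r.
apply/andP; split; apply/forall_inP => p /toggle_matchingP[Bf [t [s2 ne1 tin e1 [tp1 tp2]]]].
  have s1 : is_simplex p.1.
    by apply: chain_simplex; rewrite // e1; apply: chain_sub (simplex_chain s2) (subD1set _ _).
  by rewrite s1 s2 /covers e1 properD1 //= (cardsD1 t p.2) tin add1n.
have t1 : t \notin p.1 by rewrite e1 setD11.
apply/forall_inP => q /toggle_matchingP[Bq [u [_ _ uin eq1 [tq1 tq2]]]].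
apply/and4P; split.
- apply/implyP => /eqP e11; move: tq1; rewrite -e11 tp1 => -[_ tu]; subst u.
  by rewrite (pairE p) (pairE q) -(setD1K tin) -(setD1K uin) -e1 -eq1 e11.
- apply/implyP => /eqP e22; move: tq2; rewrite -e22 tp2 => -[_ tu]; subst u.
  by rewrite (pairE p) (pairE q) e1 eq1 e22.
- apply/eqP => e12; move: tq2; rewrite -e12 tp1 => -[_ tu]; subst u.
  by move: t1; rewrite e12 uin.
- apply/eqP => e21; move: tq1; rewrite -e21 tp2 => -[_ tu]; subst u.
  by move: tin; rewrite e21 eq1 setD11.
Qed.

(** * Acyclicity *)

Definition potential_base := #|[set: SP]|.+1.

Lemma card_lt_potential_base (X : {set SP}) : #|X| < potential_base.
Proof. by rewrite ltnS subset_leq_card ?subsetT. Qed.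

(* The triple (#|Bf|, #|above Bf c|, #|c|) written in base [potential_base],
   so that [<] compares it lexicographically. *)
Definition potential c :=
  if toggle c is Some (Bf, _) then
    (#|Bf| * potential_base + #|above Bf c|) * potential_base + #|c|
  else 0.

Lemma potential_lt p q : p \in toggle_matching -> q \in toggle_matching ->
  p.1 \proper q.2 -> p.2 != q.2 -> potential p.2 < potential q.2.
Proof.
move=> /toggle_matchingP[B [t [sp _ tin ep [tp1 tp2]]]].
move=> /toggle_matchingP[B' [t' [sq _ tin' _ [_ tq2]]]] pq neq.
have [_ _ bt _] := toggle_spec (simplex_chain sp) tp2.
have abovep : above B p.1 = above B p.2 by apply: above_eq bt _; rewrite ep setDDl setUid.
rewrite /potential tp2 tq2; apply: lex_digits_lt; rewrite ?card_lt_potential_base //.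
have [prB|[-> [et|lt_above]]] :=
  search_subset (simplex_chain sq) (proper_sub pq) (reached1 _) tp1 tq2.
- by constructor 1; apply: proper_card.
- have p2q2 : p.2 \proper q.2.
    by rewrite properEneq neq -(setD1K tin) -ep subUset sub1set -et tin' proper_sub.
  constructor 3; split=> //; last exact: proper_card.
  by rewrite -abovep; apply/subset_leq_card/above_subS/proper_sub.
- by constructor 2; rewrite -abovep.
Qed.

Lemma acyclic_toggle : acyclic toggle_matching.
Proof.
move=> s [size_s inM uniq_s cyc]; pose x0 : simplex n * simplex n := (set0, set0).
suff : size s = 0 by move=> s0; rewrite s0 in size_s.
apply: (cyclically_increasing_nil (x0 := x0) (f := fun p => potential p.2)) => i lt_i.
have lt_j : i.+1 %% size s < size s by rewrite ltn_pmod // ltnW.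
apply: potential_lt; rewrite ?(all_nthP x0 inM) ?cyc //.
rewrite -!(nth_map x0 set0 snd) // (nth_uniq _ _ _ uniq_s) ?size_map //.
have [lt_iN|] := ltnP i.+1 (size s); first by rewrite modn_small // neq_ltn ltnSn.
move=> le_Ni; have eN : i.+1 = size s by apply/eqP; rewrite eqn_leq le_Ni lt_i.
by rewrite -eN modnn -lt0n -ltnS eN.
Qed.

(** * Equivariance *)

Section Equivariance.
Variable s : {perm T}.
Hypothesis s_one : s o = o.
Local Notation act := (act_part s).
Local Notation actc := (act_simplex s).

Lemma perm_inv_one : (s^-1)%g o = o.
Proof. by rewrite -{1}s_one permK. Qed.

Lemma act_inj : injective act.
Proof. by apply/imset_inj/imset_inj/perm_inj. Qed.

Lemma act_blocks P : is_setpart P ->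
  is_setpart (act P) /\ forall x, pblock (act P) x = s @: pblock P ((s^-1)%g x).
Proof.
move=> hP; suff -> : act P = [set s @: pblock P ((s^-1)%g x) | x : T].
  apply: setpart_of_blocks => [x|x y]; first by rewrite mem_imset_perm mem_pblock_setpart.
  by rewrite mem_imset_perm => /(same_pblock_setpart hP) ->.
rewrite /act_part {1}(setpart_pblocks hP) -imset_comp; apply/setP => X.
apply/imsetP/imsetP => [[y _ ->]|[x _ ->]]; last by exists ((s^-1)%g x).
by exists (s y); rewrite //= permK.
Qed.

Lemma setpart_act P : is_setpart P -> is_setpart (act P).
Proof. by case/act_blocks. Qed.

Lemma pblock_act P x : is_setpart P -> pblock (act P) x = s @: pblock P ((s^-1)%g x).
Proof. by case/act_blocks. Qed.

Lemma refines_act P Q : is_setpart P -> is_setpart Q -> refines (act P) (act Q) = refines P Q.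
Proof.
move=> hP hQ; apply/(refinesP (setpart_act hP) (setpart_act hQ))/(refinesP hP hQ).
  by move=> PQ x; move: (PQ (s x)); rewrite !pblock_act // permK subset_imset_perm.
by move=> PQ x; rewrite !pblock_act // subset_imset_perm.
Qed.

Lemma act_finest : act (finest n) = finest n.
Proof.
case: (@finest_blocks n) => hf ef; apply: eq_setpart => //; first exact: setpart_act.
by move=> x; rewrite pblock_act // ef imset_set1 permKV.
Qed.

Lemma act_coarsest : act (coarsest n) = coarsest n.
Proof.
case: coarsest_blocks => hc ec; apply: eq_setpart => //; first exact: setpart_act.
by move=> x; rewrite pblock_act // ec imset_permT.
Qed.

Lemma proper_part_act P : proper_part P -> proper_part (act P).
Proof.
case/and3P => hP nf nc; apply/and3P; split; first exact: setpart_act.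
  by rewrite -act_finest (inj_eq act_inj).
by rewrite -act_coarsest (inj_eq act_inj).
Qed.

Lemma chain_act c : is_chain c -> is_chain (actc c).
Proof.
move=> hc; apply/andP; split; apply/forall_inP => _ /imsetP[P Pc ->].
  exact/proper_part_act/(chain_proper_part hc Pc).
apply/forall_inP => _ /imsetP[Q Qc ->].
have hP := chain_setpart hc Pc; have hQ := chain_setpart hc Qc.
by rewrite !refines_act // (chain_comparable hc Pc Qc).
Qed.

Lemma simplex_act c : is_simplex c -> is_simplex (actc c).
Proof.
move=> sc; apply: chain_simplex; last exact/chain_act/simplex_chain.
by rewrite imset_eq0; case/and3P: sc.
Qed.

Lemma block1_act P : is_setpart P -> block1 (act P) = s @: block1 P.
Proof. by move=> hP; rewrite /block1 pblock_act // perm_inv_one. Qed.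

Lemma single_block_act B : act (single_block B) = single_block (s @: B).
Proof.
apply: eq_setpart; [exact/setpart_act/setpart_single_block | exact: setpart_single_block |].
move=> x; rewrite pblock_act ?setpart_single_block // !pblock_single_block mem_imset_perm.
by case: ifP => // _; rewrite imset_set1 permKV.
Qed.

Lemma split_off_act B P : is_setpart P -> B \subset block1 P ->
  act (split_off B P) = split_off (s @: B) (act P).
Proof.
move=> hP sB; have sB' : s @: B \subset block1 (act P) by rewrite block1_act // subset_imset_perm.
apply: eq_setpart; first exact/setpart_act/setpart_split_off.
  exact/setpart_split_off/sB'/setpart_act.
move=> x; rewrite pblock_act ?setpart_split_off // !pblock_split_off ?setpart_act //.
rewrite /split_off_block block1_act // !mem_imset_perm.
by case: ifP => // _; case: ifP => _; rewrite ?imset_permD ?pblock_act.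
Qed.

Lemma above_act B c : is_chain c -> above (s @: B) (actc c) = act @: above B c.
Proof.
move=> hc; apply/setP => Q'; rewrite inE; apply/andP/imsetP => [[/imsetP[Q Qc ->]]|[Q]].
  rewrite block1_act ?(chain_setpart hc Qc) // proper_imset_perm => prBQ.
  by exists Q; rewrite // inE Qc.
rewrite inE => /andP[Qc prBQ] ->; split; first exact: imset_f.
by rewrite block1_act ?(chain_setpart hc Qc) // proper_imset_perm.
Qed.

Lemma least_above_act B c : is_chain c ->
  least_above (s @: B) (actc c) = act (least_above B c).
Proof.
move=> hc; have hc' := chain_act hc; have sU := subsetP (above_sub B c).
case: (least_aboveP B hc) => [ab0|P PU Pmin].
  by rewrite act_coarsest least_above_set0 // above_act // ab0 imset0.
apply: least_above_eq; rewrite // ?above_act ?imset_f // => _ /imsetP[R RU ->].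
by rewrite refines_act ?Pmin ?(chain_setpart hc (sU _ RU)) ?(chain_setpart hc (sU _ PU)).
Qed.

Lemma search_act k B c : is_chain c ->
  search k (s @: B) (actc c) =
  omap (fun r : {set T} * SP => (s @: r.1, act r.2)) (search k B c).
Proof.
move=> hc; elim: k B => [//|k IH] B /=.
rewrite -{1}(imset_permT s) (inj_eq (imset_inj (@perm_inj _ s))).
have [//|BT] := eqVneq B setT.
have hP := setpart_least_above B hc; have sB := proper_sub (proper_block1_least_above hc BT).
rewrite /candidate least_above_act // -split_off_act // -single_block_act (inj_eq act_inj).
by case: ifP => _ //; rewrite block1_act // IH.
Qed.

Lemma toggle_matching_act p : p \in toggle_matching ->
  (actc p.1, actc p.2) \in toggle_matching.
Proof.
case/toggle_matchingP => Bf [t [s2 ne1 tin e1 [_ tp2]]].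
have toggle_act : toggle (actc p.2) = Some (s @: Bf, act t).
  have set1E : [set o] = s @: [set o] by rewrite imset_set1 s_one.
  by rewrite /toggle set1E search_act ?simplex_chain // -/(toggle p.2) tp2.
rewrite inE /= simplex_act // toggle_act imset_eq0 ne1 mem_imset ?tin; last exact: act_inj.
by rewrite e1 /act_simplex imsetD1 ?eqxx //; apply: act_inj.
Qed.

End Equivariance.

(** * Critical simplices *)

Lemma critical_toggle_none c : toggle c = None -> critical toggle_matching c.
Proof.
move=> none; apply/forall_inP => p /toggle_matchingP[Bf [t [_ _ _ _ [tp1 tp2]]]].
by apply/andP; split; apply/eqP => eqc; move: none; rewrite -eqc ?tp1 ?tp2.
Qed.

Lemma critical_toggle_singleton c Bf t : toggle c = Some (Bf, t) -> c = [set t] ->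
  critical toggle_matching c.
Proof.
move=> found ec; apply/forall_inP => p /toggle_matchingP[B' [t' [_ ne1 _ e1 [tp1 tp2]]]].
apply/andP; split; apply/eqP => eqc.
  move: tp1; rewrite eqc found => -[_ tt]; have := setD11 t' p.2.
  by rewrite -e1 eqc -tt ec set11.
by move: tp2 ne1; rewrite e1 eqc found => -[_ <-]; rewrite ec setDv eqxx.
Qed.

Lemma not_critical_toggle c Bf t : is_simplex c -> toggle c = Some (Bf, t) ->
  c != [set t] -> ~~ critical toggle_matching c.
Proof.
move=> sc found nec; apply/negP => /forall_inP crit.
have [tc|tc] := boolP (t \in c).
  have ne : c :\ t != set0 by apply: contra nec => /eqP c0; rewrite -(setD1K tc) c0 setU0.
  by move: (crit _ (toggle_matching_setD1 sc found tc ne)); rewrite /= eqxx andbF.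
by move: (crit _ (toggle_matching_setU1 sc found tc)); rewrite /= eqxx.
Qed.

Lemma not_in_C_toggle c Bf t : is_simplex c -> toggle c = Some (Bf, t) -> ~~ in_C c.
Proof.
move=> sc found; have hc := simplex_chain sc; have [_ _ _ nAt] := toggle_spec hc found.
apply/negP => inC; have [tc|tc] := boolP (t \in c).
  by case/and3P: inC => _ _ /forall_inP/(_ _ tc); rewrite (negbTE nAt).
have := card_chain_le (chain_setU1_toggle hc found); rewrite cardsU1 tc add1n.
case/and3P: inC => _ /eqP dimc _; rewrite /dim in dimc.
have c0 : 0 < #|c| by rewrite card_gt0; case/and3P: sc.
by move: #|c| c0 dimc => k c0 dimc; lia.
Qed.

Lemma in_C_toggle_none c : is_simplex c -> toggle c = None -> in_C c.
Proof.
move=> sc none; have hc := simplex_chain sc.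
have := search_none hc (reached1 c) _ none; rewrite cards1 add1n ltnSn => /(_ isT).
set S := [set Q in _ | _] => cardS.
have sSc : S \subset c by apply/subsetP => Q; rewrite !inE => /andP[/andP[]].
have cardc := card_chain_le hc.
have eS : S = c.
  apply/eqP; rewrite eqEcard sSc; apply: leq_trans cardc _.
  by move: cardS; rewrite -subn1 -subnDA.
apply/and3P; split => //.
  move: cardS cardc; rewrite eS /dim; move: #|c| => k; lia.
by apply/forall_inP => P; rewrite -eS !inE => /andP[].
Qed.

Hypothesis n_gt2 : 2 < n.

Definition alpha_part : SP := [set [set i | is_one i]; [set i | ~~ is_one i]].

Lemma alphaE : alpha n = [set alpha_part].
Proof. by []. Qed.

Let one : T := Ordinal (ltnW n_gt2).
Let two : T := Ordinal n_gt2.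

Lemma set1_one_neqT : [set o] != setT.
Proof. by apply/eqP => /setP/(_ one); rewrite !inE (negbTE (ord_neq_one (i := one) isT)). Qed.

Lemma split_off_coarsest1 : split_off [set o] (coarsest n) = alpha_part.
Proof.
have e1 : [set i | is_one i] = [set o] by apply/setP => i; rewrite !inE is_oneE.
have e2 : [set i | ~~ is_one i] = setT :\ o by apply/setP => i; rewrite !inE is_oneE andbT.
rewrite /alpha_part e1 e2 /split_off /split_off_block block1_coarsest.
apply/setP => X; rewrite !inE; apply/imsetP/orP => [[x _ ->]|[/eqP->|/eqP->]].
- by rewrite !inE /=; case: ifP => _; [left | right].
- by exists o; rewrite ?set11.
- by exists one; rewrite // !inE (negbTE (ord_neq_one (i := one) isT)).
Qed.

Lemma block1_alpha : block1 alpha_part = [set o].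
Proof.
have [hC _] := coarsest_blocks.
by rewrite -split_off_coarsest1 block1_split_off ?block1_coarsest ?subsetT ?set11.
Qed.

(* It is not the finest partition: the ordinals 1 and 2 share a block. *)
Lemma proper_part_alpha : proper_part alpha_part.
Proof.
have [hC _] := coarsest_blocks; have sT : [set o] \subset block1 (coarsest n).
  by rewrite block1_coarsest subsetT.
rewrite -split_off_coarsest1; apply: proper_part_split_off; rewrite ?set11 ?set1_one_neqT //.
apply/eqP => /(congr1 (pblock^~ one)).
rewrite pblock_split_off // pblock_single_block /split_off_block block1_coarsest.
rewrite !inE (negbTE (ord_neq_one (i := one) isT)) => /setP/(_ two).
by rewrite !inE (negbTE (ord_neq_one (i := two) isT)).
Qed.

Lemma toggle_alpha : toggle (alpha n) = Some ([set o], alpha_part).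
Proof.
have ab0 : above [set o] (alpha n) = set0.
  by apply/setP => P; rewrite alphaE !inE; case: eqP => // ->; rewrite block1_alpha properE subxx.
have neq : alpha_part != single_block [set o].
  by rewrite -finest_single_block; case/and3P: proper_part_alpha.
rewrite /toggle -[in search n](prednK (ltnW (ltnW n_gt2))) /= (negbTE set1_one_neqT).
by rewrite /candidate least_above_set0 // split_off_coarsest1 neq.
Qed.

Lemma toggle_singleton c Bf t : is_chain c -> toggle c = Some (Bf, t) -> c = [set t] ->
  t = alpha_part.
Proof.
move=> hc found ec; have [[_ rBf] _ BfT tdef neqt] := search_some hc (reached1 c) found.
have [_ _ bt _] := toggle_spec hc found.
have eBf : Bf = [set o].
  case: rBf => [//|eT|]; first by rewrite eT eqxx in BfT.
  by rewrite ec inE => /eqP eBt; rewrite -eBt eqxx in neqt.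
have ab0 : above Bf c = set0.
  by apply/setP => Q; rewrite ec !inE; case: eqP => // ->; rewrite bt properE subxx andbF.
by rewrite tdef /candidate least_above_set0 // eBf split_off_coarsest1.
Qed.

Lemma critical_toggle c : is_simplex c ->
  (critical toggle_matching c <-> in_C c \/ c = alpha n).
Proof.
move=> sc; have hc := simplex_chain sc.
case found: (toggle c) => [[Bf t]|]; last first.
  by split=> _; [left; apply: in_C_toggle_none | apply: critical_toggle_none].
have [ec|nec] := eqVneq c [set t].
  split=> _; last exact: critical_toggle_singleton found ec.
  by right; rewrite ec alphaE (toggle_singleton hc found ec).
have c_alpha : c != alpha n.
  by apply: contra_neq nec => eA; move: found; rewrite eA toggle_alpha alphaE => -[_ <-].
split=> [crit|[inC|eA]].
- by move: (not_critical_toggle sc found nec); rewrite crit.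
- by move: (not_in_C_toggle sc found); rewrite inC.
- by rewrite eA eqxx in c_alpha.
Qed.

End Pointed.

Unset Implicit Arguments.

Theorem proposition11 (n : nat) (hn : 3 <= n) :
  exists M : {set simplex n * simplex n},
    [/\ is_matching M, acyclic M, equivariant M &
        forall c : simplex n, is_simplex c ->
          (critical M c <-> (in_C c \/ c = alpha n))].
Proof.
have n_gt0 : 0 < n by apply: leq_trans hn.
pose one : 'I_n := Ordinal n_gt0.
have one_one : is_one one by [].
exists (toggle_matching one); split.
- exact: is_matching_toggle.
- exact: acyclic_toggle.
- move=> s /forallP/(_ one)/implyP/(_ one_one); rewrite !(is_oneE one_one) => /eqP s_one.
  exact: toggle_matching_act.
- by move=> c; apply: critical_toggle.
Qed.
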